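(* For any finite group $G$, we have $\alpha_{G,n}\sim |Z(G)|\,|G|^{n-1}$ and $\beta_{G,n}\sim C a^n$ as $n\to\infty$, where $a$ is the maximal cardinality of an abelian subgroup of $G$ and $C$ is some positive constant (depending on $G$). Here $a_n\sim b_n$ means $\lim_{n\to\infty}a_n/b_n=1$.
   Context: For a finite group $G$ and an integer $n\ge 0$, $G$ acts on $G^n$ by simultaneous conjugation $g\cdot(x_1,\dots,x_n)=(gx_1g^{-1},\dots,gx_ng^{-1})$. Let $G^{(n)}=\{(x_1,\dots,x_n)\in G^n : x_ix_j=x_jx_i \text{ for all } 1\le i,j\le n\}$, which is stable under this action. Let $\alpha_{G,n}$ be the number of $G$-orbits on $G^n$ and $\beta_{G,n}$ the number of $G$-orbits on $G^{(n)}$. $Z(G)$ denotes the center of $G$. *)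

From HB Require Import structures.
From mathcomp Require Import all_boot all_order all_algebra all_fingroup all_solvable.
Set Implicit Arguments.
Unset Strict Implicit.
Unset Printing Implicit Defensive.

Local Open Scope group_scope.

Section Defs.
Variable gT : finGroupType.
Implicit Types (G : {group gT}) (n : nat).

Definition tuplesG G n : {set {ffun 'I_n -> gT}} :=
  [set x : {ffun 'I_n -> gT} | [forall i, x i \in G]].

Definition ctuplesG G n : {set {ffun 'I_n -> gT}} :=
  [set x : {ffun 'I_n -> gT} in tuplesG G n | [forall i, forall j, x i * x j == x j * x i]].

Definition conj_tuple n (x : {ffun 'I_n -> gT}) (g : gT) : {ffun 'I_n -> gT} :=
  [ffun i => x i ^ g].

Definition sconj_orbit G n (x : {ffun 'I_n -> gT}) : {set {ffun 'I_n -> gT}} :=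
  [set conj_tuple x g | g in G].

Definition num_orbits G n (S : {set {ffun 'I_n -> gT}}) : nat :=
  #|[set sconj_orbit G x | x in S]|.

Definition alpha G n : nat := num_orbits G (tuplesG G n).
Definition beta G n : nat := num_orbits G (ctuplesG G n).

Definition max_abelian_card G : nat :=
  \max_(H : {group gT} | (H \subset G) && abelian H) #|H|.
End Defs.

(* Burnside's lemma for the simultaneous conjugation action on n-tuples gives
   alpha_n |G| = sum_(g in G) |C_G(g)|^n, in which central elements contribute
   |Z(G)| |G|^n and the others O((|G| - 1)^n).  For commuting tuples it gives
   beta_n |G| = sum_B N_n(B) |C_G(B)|, B ranging over the abelian subgroups of G
   and N_n(B) counting the n-tuples generating B.  Now N_n(B) = |B|^n up to the
   O((|B| - 1)^n) tuples lying in proper subgroups, and an abelian subgroup of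
   maximal order a is its own centralizer in G, so
   beta_n |G| = k a^(n+1) + O((a - 1)^n) with k the number of such subgroups,
   i.e. C = k a / |G|. *)

From HB Require Import structures.
From mathcomp Require Import all_boot all_order all_algebra all_fingroup all_solvable.
From mathcomp Require Import all_classical all_reals all_analysis.
From mathcomp Require Import ring.
(* Re-imported so that names such as subsetP refer to finsets, not classical sets. *)
From mathcomp Require Import unstable fintype finset.
Import Order.TTheory GRing.Theory Num.Theory.
Import numFieldNormedType.Exports.

Set Implicit Arguments.
Unset Strict Implicit.
Unset Printing Implicit Defensive.

Lemma leq_expn2r m n e : m <= n -> m ^ e <= n ^ e.
Proof. by case: e => [|e] // le_mn; rewrite leq_exp2r. Qed.

Lemma leq_sum_const (I : finType) (P : pred I) (F : I -> nat) c :
  (forall i, P i -> F i <= c) -> \sum_(i | P i) F i <= #|P| * c.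
Proof. by move=> le_Fc; rewrite -sum_nat_const; apply: leq_sum. Qed.

Lemma proper_card_pred (T : finType) (A B : {set T}) : A \proper B -> #|A| <= #|B|.-1.
Proof. by move/proper_card; case: #|B|. Qed.

Section MaxAbelian.
Local Open Scope group_scope.
Local Open Scope nat_scope.
Variables (gT : finGroupType) (G : {group gT}).
Local Notation a := (max_abelian_card G).

Lemma leq_max_abelian_card (B : {group gT}) : B \subset G -> abelian B -> #|B| <= a.
Proof.
move=> sBG cBB; rewrite /max_abelian_card.
by apply: (@leq_bigmax_cond _ (fun H : {group gT} => (H \subset G) && abelian H)); rewrite sBG.
Qed.

Lemma max_abelian_card_gt0 : 0 < a.
Proof. exact: leq_trans (cardG_gt0 1%G) (leq_max_abelian_card (sub1G G) (abelian1 _)). Qed.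

Definition max_abelians : {set {group gT}} :=
  [set B : {group gT} | [&& B \subset G, abelian B & #|B| == a]].

Lemma card_max_abelians_gt0 : 0 < #|max_abelians|.
Proof.
have abelian_subgroups_gt0 : 0 < #|fun H : {group gT} => (H \subset G) && abelian H|.
  by apply/card_gt0P; exists 1%G; rewrite /in_mem /= sub1G abelian1.
have [B /andP[sBG cBB] maxB] := eq_bigmax_cond (fun H : {group gT} => #|H|) abelian_subgroups_gt0.
by apply/card_gt0P; exists B; rewrite inE sBG cBB /max_abelian_card maxB eqxx.
Qed.

Lemma subcent_max_abelians B : B \in max_abelians -> 'C_G(B) = B.
Proof.
rewrite inE => /and3P[sBG cBB /eqP cardB]; apply/eqP.
rewrite eqEsubset subsetI sBG; apply/and3P; split=> //; apply/subsetP=> g /setIP[Gg cBg].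
have cHH : abelian (B <*> <[g]>) by rewrite abelianY cBB cycle_abelian cycle_subG cBg.
have sHG : B <*> <[g]> \subset G by rewrite join_subG sBG cycle_subG Gg.
have /eqP-> : B :==: B <*> <[g]>.
  by rewrite eqEcard joing_subl cardB (leq_max_abelian_card (B := (B <*> <[g]>)%G)).
exact: subsetP (joing_subr B <[g]>) g (cycle_id g).
Qed.

End MaxAbelian.

Section ConjugationOfTuples.
Local Open Scope group_scope.
Local Open Scope nat_scope.
Variables (gT : finGroupType) (n : nat).
Implicit Types (G B : {group gT}) (x : {ffun 'I_n -> gT}).

Lemma conj_tuple1 : (@conj_tuple gT n)^~ 1%g =1 id.
Proof. by move=> x; apply/ffunP=> i; rewrite ffunE conjg1. Qed.

Lemma conj_tupleM x : act_morph (@conj_tuple gT n) x.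
Proof. by move=> g h; apply/ffunP=> i; rewrite !ffunE conjgM. Qed.

Definition conj_tuple_action := TotalAction conj_tuple1 conj_tupleM.
Local Notation "'Jt" := conj_tuple_action (at level 8).

Definition tuple_set x : {set gT} := [set x i | i : 'I_n].
Definition tuple_gen x : {group gT} := <<tuple_set x>>%G.

Lemma tuple_set_conj x g : tuple_set (conj_tuple x g) = tuple_set x :^ g.
Proof.
rewrite /tuple_set /conjugate -imset_comp; apply: eq_imset => i /=.
by rewrite ffunE.
Qed.

Lemma in_tuplesG G x : (x \in tuplesG G n) = (tuple_set x \subset G).
Proof.
rewrite inE; apply/forallP/subsetP => [Gx _ /imsetP[i _ ->] | sxG i] //.
by apply: sxG; apply: imset_f.
Qed.

Lemma in_ctuplesG G x :
  (x \in ctuplesG G n) = (tuple_gen x \subset G) && abelian (tuple_gen x).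
Proof.
rewrite inE in_tuplesG gen_subG abelian_gen; congr andb.
apply/forallP/centsP => [cx _ /imsetP[i _ ->] _ /imsetP[j _ ->] | cx i].
  by apply/eqP; have /forallP := cx i; apply.
by apply/forallP=> j; apply/eqP; apply: cx; apply: imset_f.
Qed.

Lemma card_tuplesG G : #|tuplesG G n| = (#|G| ^ n)%N.
Proof.
rewrite -[in RHS](card_ord n) -card_ffun_on; apply: eq_card => x.
by rewrite inE; apply/forallP/ffun_onP.
Qed.

Lemma acts_tuplesG G : [acts G, on tuplesG G n | 'Jt].
Proof.
apply/actsP=> g Gg x; rewrite !in_tuplesG /= tuple_set_conj.
by rewrite sub_conjg conjGid ?groupV.
Qed.

Lemma acts_ctuplesG G : [acts G, on ctuplesG G n | 'Jt].
Proof.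
apply/actsP=> g Gg x; rewrite !in_ctuplesG /tuple_gen /= tuple_set_conj genJ.
by rewrite abelianJ sub_conjg conjGid ?groupV.
Qed.

Lemma afix_conj_tuple (S : {set {ffun 'I_n -> gT}}) g x :
  (x \in 'Fix_(S | 'Jt)[g]) = (x \in S) && (g \in 'C(tuple_set x)).
Proof.
rewrite inE; congr andb; apply/afix1P/centP => [xg _ /imsetP[i _ ->] | cxg].
  by apply/esym/commgP/conjg_fixP; rewrite -{2}xg ffunE.
by apply/ffunP=> i; rewrite ffunE; apply/conjg_fixP/commgP/esym/cxg/imset_f.
Qed.

Lemma num_orbits_mul_card G S : [acts G, on S | 'Jt] ->
  num_orbits G S * #|G| = \sum_(g in G) #|'Fix_(S | 'Jt)[g]|.
Proof. by move/Frobenius_Cauchy->. Qed.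

Lemma afix_tuplesG G g : 'Fix_(tuplesG G n | 'Jt)[g] = tuplesG 'C_G[g] n.
Proof. by apply/setP=> x; rewrite afix_conj_tuple !in_tuplesG subsetI sub_cent1. Qed.

Lemma alpha_mul_card G : alpha G n * #|G| = \sum_(g in G) #|'C_G[g]| ^ n.
Proof.
rewrite num_orbits_mul_card ?acts_tuplesG //.
by apply: eq_bigr => g _; rewrite afix_tuplesG card_tuplesG.
Qed.

Lemma alpha_mul_card_bounds G :
  #|'Z(G)| * #|G| ^ n <= alpha G n * #|G| <= #|'Z(G)| * #|G| ^ n + #|G| * #|G|.-1 ^ n.
Proof.
rewrite alpha_mul_card (big_setID 'Z(G)) /= (setIidPr (center_sub G)).
have -> : \sum_(g in 'Z(G)) #|'C_G[g]| ^ n = #|'Z(G)| * #|G| ^ n.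
  rewrite -sum_nat_const; apply: eq_bigr => g /setIP[_ cGg].
  by rewrite (setIidPl _) // sub_cent1.
rewrite leq_addr leq_add2l /=.
apply: leq_trans (leq_sum_const (c := #|G|.-1 ^ n) _) _.
  move=> g /setDP[Gg notZg]; apply/leq_expn2r/proper_card_pred.
  rewrite properEneq subsetIl andbT; apply: contraNneq notZg => CGg.
  by rewrite inE Gg -sub_cent1 -CGg subsetIr.
by rewrite leq_mul2r subset_leq_card ?subsetDl ?orbT.
Qed.

Definition generating_tuples B : {set {ffun 'I_n -> gT}} := [set x | tuple_gen x == B].

Lemma beta_mul_card G :
  beta G n * #|G| = \sum_(x in ctuplesG G n) #|'C_G(tuple_gen x)|.
Proof.
rewrite num_orbits_mul_card ?acts_ctuplesG //.
under eq_bigr do rewrite -sum1_card.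
rewrite (exchange_big_dep [in ctuplesG G n]) /= => [|g x _]; last first.
  by rewrite afix_conj_tuple => /andP[].
apply: eq_bigr => x Sx; rewrite sum1dep_card cent_gen; apply: eq_card => g.
by rewrite in_set afix_conj_tuple Sx inE.
Qed.

Lemma beta_mul_card_abelian G :
  beta G n * #|G| = \sum_(B : {group gT} | (B \subset G) && abelian B)
                      #|generating_tuples B| * #|'C_G(B)|.
Proof.
rewrite beta_mul_card (partition_big tuple_gen
  (fun B : {group gT} => (B \subset G) && abelian B)) /= => [|x]; last first.
  by rewrite in_ctuplesG.
apply: eq_bigr => B /andP[sBG cBB]; rewrite -sum_nat_const.
apply: eq_big => [x | x /andP[_ /eqP <-] //].
by rewrite [RHS]inE; apply: andb_idl => /eqP genB; rewrite in_ctuplesG genB sBG.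
Qed.

Lemma card_generating_tuples_le B : #|generating_tuples B| <= #|B| ^ n.
Proof.
rewrite -card_tuplesG subset_leq_card //; apply/subsetP=> x.
by rewrite inE in_tuplesG => /eqP <-; apply: subset_gen.
Qed.

Lemma card_generating_tuples_ge B :
  #|B| ^ n <= #|generating_tuples B| + #|{group gT}| * #|B|.-1 ^ n.
Proof.
have cover : tuplesG B n \subset
    generating_tuples B :|: \bigcup_(C : {group gT} | C \proper B) tuplesG C n.
  apply/subsetP=> x; rewrite in_tuplesG -gen_subG => sxB; rewrite !inE.
  have [//|neB] := eqVneq (tuple_gen x) B; apply/bigcupP; exists (tuple_gen x).
    by rewrite properEneq sxB andbT.
  by rewrite in_tuplesG subset_gen.
rewrite -card_tuplesG (leq_trans (subset_leq_card cover)) //.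
rewrite (leq_trans (leq_card_setU _ _).1) // leq_add2l.
apply: leq_trans (card_big_setU _ _ _) _.
apply: leq_trans (leq_sum_const (c := #|B|.-1 ^ n) _) _.
  by move=> C /proper_card_pred; rewrite card_tuplesG; apply: leq_expn2r.
by rewrite leq_mul2r max_card orbT.
Qed.

End ConjugationOfTuples.

Section BetaBounds.
Local Open Scope nat_scope.
Variables (gT : finGroupType) (G : {group gT}) (n : nat).
Local Notation a := (max_abelian_card G).
Local Notation m := (#|max_abelians G| * a).

Lemma beta_mul_card_bounds :
  m * a ^ n <= beta G n * #|G| + m * #|{group gT}| * a.-1 ^ n /\
  beta G n * #|G| <= m * a ^ n + #|G| * #|{group gT}| * a.-1 ^ n.
Proof.
rewrite beta_mul_card_abelian (bigID (fun B : {group gT} => #|B| == a)) /=.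
set S1 := \sum_(B : {group gT} | _ && (#|B| == a)) _.
set S2 := \sum_(B : {group gT} | _ && ~~ _) _.
have S1E : S1 = \sum_(B in max_abelians G) #|generating_tuples n B| * a.
  apply: eq_big => [B | B /andP[/andP[sBG cBB] /eqP cardB]]; first by rewrite inE andbA.
  by rewrite subcent_max_abelians ?cardB // inE sBG cBB cardB eqxx.
split.
  rewrite addnAC (leq_trans _ (leq_addr _ _)) // S1E -!mulnA.
  rewrite -[X in X <= _]sum_nat_const -[X in _ <= _ + X]sum_nat_const -big_split /=.
  apply: leq_sum => B; rewrite inE => /and3P[_ _ /eqP <-].
  by rewrite mulnC [_ * (_ * _)]mulnC -mulnDl leq_mul2r card_generating_tuples_ge orbT.
apply: leq_add.
  rewrite S1E -mulnA -sum_nat_const; apply: leq_sum => B.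
  by rewrite inE => /and3P[_ _ /eqP <-]; rewrite mulnC leq_mul2l card_generating_tuples_le orbT.
rewrite -mulnA mulnCA; apply: leq_trans (leq_sum_const (c := #|G| * a.-1 ^ n) _) _.
  move=> B /andP[/andP[sBG cBB] neBa]; rewrite mulnC.
  apply: leq_mul; first exact/subset_leq_card/subsetIl.
  apply: leq_trans (card_generating_tuples_le n B) (leq_expn2r _ _).
  rewrite -ltnS prednK ?max_abelian_card_gt0 // ltn_neqAle neBa.
  exact: leq_max_abelian_card.
by rewrite leq_mul2r max_card orbT.
Qed.

End BetaBounds.

Local Open Scope classical_set_scope.
Local Open Scope ring_scope.

Lemma cvg_ratio_geometric (R : realType) (x : nat -> R) (M A B K : R) :
  0 < M -> 0 <= B < A -> (forall k, `|x k - M * A ^+ k| <= K * B ^+ k) ->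
  (fun k => x k / (M * A ^+ k)) @ \oo --> (1 : R).
Proof.
move=> M_gt0 /andP[B_ge0 lt_BA] x_near.
have A_gt0 : 0 < A := le_lt_trans B_ge0 lt_BA.
have q_lt1 : `|B / A| < 1.
  by rewrite ger0_norm ?divr_ge0 ?(ltW A_gt0) // ltr_pdivrMr // mul1r.
pose e k := K / M * (B / A) ^+ k.
have e_cvg0 : e @ \oo --> (0 : R).
  by rewrite -(mulr0 (K / M)); apply: cvgMr; exact: cvg_expr.
have e_lo : (fun k => 1 - e k) @ \oo --> (1 : R).
  by rewrite -[X in _ --> X]subr0; apply: cvgB => //; exact: cvg_cst.
have e_hi : (fun k => 1 + e k) @ \oo --> (1 : R).
  by rewrite -[X in _ --> X]addr0; apply: cvgD => //; exact: cvg_cst.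
apply: (squeeze_cvgr _ e_lo e_hi); apply: nearW => k; rewrite -ler_distl.
have MAk_gt0 : 0 < M * A ^+ k by rewrite mulr_gt0 ?exprn_gt0.
have -> : x k / (M * A ^+ k) - 1 = (x k - M * A ^+ k) / (M * A ^+ k).
  by rewrite mulrBl divff ?gt_eqF.
rewrite normrM normfV (gtr0_norm MAk_gt0) ler_pdivrMr // /e.
suff -> : K / M * (B / A) ^+ k * (M * A ^+ k) = K * B ^+ k by [].
by rewrite expr_div_n; field; rewrite !gt_eqF ?exprn_gt0.
Qed.

Lemma cvg_ratio_geometric_nat (R : realType) (X : nat -> nat) (M a E1 E2 : nat) :
  (0 < M)%N -> (0 < a)%N ->
  (forall k, M * a ^ k <= X k + E1 * a.-1 ^ k /\ X k <= M * a ^ k + E2 * a.-1 ^ k)%N ->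
  (fun k => (X k)%:R / (M%:R * a%:R ^+ k)) @ \oo --> (1 : R).
Proof.
move=> M_gt0 a_gt0 X_near; apply: (@cvg_ratio_geometric R _ _ _ a.-1%:R (E1 + E2)%:R).
- by rewrite ltr0n.
- by rewrite ler0n ltr_nat ltn_predL.
move=> k; have [lo hi] := X_near k.
rewrite ler_distl lerBlDr -!natrX -!natrM -!natrD !ler_nat mulnDl.
by rewrite (leq_trans lo) ?(leq_trans hi) // leq_add2l ?leq_addl ?leq_addr.
Qed.

Theorem theorem3p1 (gT : finGroupType) (G : {group gT}) (R : realType) :
  ((fun n : nat => (alpha G n)%:R /
       ((#|('Z(G))%g|)%:R * (#|G|)%:R ^+ n / (#|G|)%:R) : R) @ \oo --> (1%R : R))
  /\ (exists C : R, 0 < C /\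
       ((fun n : nat => (beta G n)%:R / (C * (max_abelian_card G)%:R ^+ n) : R)
          @ \oo --> (1%R : R))).
Proof.
split.
  have -> : (fun n => (alpha G n)%:R / (#|('Z(G))%g|%:R * #|G|%:R ^+ n / #|G|%:R) : R) =
            (fun n => (alpha G n * #|G|)%N%:R / (#|('Z(G))%g|%:R * #|G|%:R ^+ n)).
    by apply: funext => n; rewrite natrM invf_div mulrA.
  apply: (@cvg_ratio_geometric_nat _ _ _ _ 0 #|G|) => [||n]; rewrite ?cardG_gt0 //.
  by have /andP[lo hi] := alpha_mul_card_bounds n G; rewrite mul0n addn0 lo hi.
set a := max_abelian_card G; set m := (#|max_abelians G| * a)%N.
have m_gt0 : (0 < m)%N by rewrite muln_gt0 card_max_abelians_gt0 max_abelian_card_gt0.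
exists (m%:R / #|G|%:R); split; first by rewrite divr_gt0 ?ltr0n ?cardG_gt0.
have -> : (fun n => (beta G n)%:R / (m%:R / #|G|%:R * a%:R ^+ n) : R) =
          (fun n => (beta G n * #|G|)%N%:R / (m%:R * a%:R ^+ n)).
  by apply: funext => n; rewrite mulrAC invf_div mulrA natrM.
apply: cvg_ratio_geometric_nat => // [|n]; first exact: max_abelian_card_gt0.
exact: beta_mul_card_bounds.
Qed.
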